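(* Let $X$ and $Y$ be any words. Then $X\sim Y$ if and only if there is a sequence of swaps between $X$ and $Y$ in which every swap is of type $(U,D)$ for some upper prime $U$ and some lower prime $D$.
   Context: $\mathcal{A}$ is the free associative $\mathbb{C}$-algebra on noncommuting generators $L,R$; words are finite products of these letters. A word is balanced if it contains equally many $L$'s and $R$'s. $\mathcal{J}$ is the two-sided ideal generated by $\{FG-GF : F,G \text{ nonempty balanced words}\}$, and $X\sim Y$ means $X-Y\in\mathcal{J}$. For nonempty balanced $F,G$ and words $W_1,W_2$, the words $W_1FGW_2$ and $W_1GFW_2$ are related by a swap of type $(F,G)$ (same as type $(G,F)$); a sequence of swaps between $X$ and $Y$ is a sequence $Z_1=X,\dots,Z_k=Y$ with consecutive words related by a swap. A word is prime if it is nonempty, balanced, and not a product of two nonempty balanced words. For balanced $W=a_1\cdots a_n$, $e_k(W)=\sum_{i=1}^k\overline{a_i}$ with $\overline{R}=1$, $\overline{L}=-1$. A prime $P$ of length $n$ is an upper prime if $e_k(P)>0$ for $1\le k\le n-1$, and a lower prime if $e_k(P)<0$ for $1\le k\le n-1$. *)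

From HB Require Import structures.
From mathcomp Require Import all_boot all_order all_algebra.
From mathcomp Require Import complex.
From mathcomp Require Import Rstruct.
Set Implicit Arguments. Unset Strict Implicit. Unset Printing Implicit Defensive.
Import Order.TTheory GRing.Theory Num.Theory.

Definition C : fieldType := (Rdefinitions.R)[i].

Inductive letter := L | R.

Definition letter_eqb (a b : letter) : bool :=
  match a, b with L, L | R, R => true | _, _ => false end.
Lemma letter_eqP : Equality.axiom letter_eqb.
Proof. by case; case; constructor. Qed.
HB.instance Definition _ := hasDecEq.Build letter letter_eqP.

Definition word := seq letter.

Definition balanced (W : word) : bool := count_mem L W == count_mem R W.

Definition bar (a : letter) : int := if a is R then 1%:Z else (-1)%R.
Definition e (k : nat) (W : word) : int := (\sum_(a <- take k W) bar a)%R.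

Definition prime_word (P : word) : Prop :=
  [/\ P != [::], balanced P &
      ~ (exists A B : word, [/\ A != [::], B != [::], balanced A, balanced B
                              & P = A ++ B])].

Definition upper_prime (P : word) : Prop :=
  prime_word P /\ (forall k, 1 <= k <= (size P).-1 -> (0 < e k P)%R).

Definition lower_prime (P : word) : Prop :=
  prime_word P /\ (forall k, 1 <= k <= (size P).-1 -> (e k P < 0)%R).

(* The free associative C-algebra A on L, R: an element is identified with
   its coefficient function on the basis of words (all elements built below
   have finite support). *)
Definition elt := word -> C.

Definition delta (W : word) : elt := fun V => if V == W then 1%R else 0%R.

Definition lmulw (W : word) (f : elt) : elt :=
  fun V => if take (size W) V == W then f (drop (size W) V) else 0%R.
Definition rmulw (f : elt) (W : word) : elt :=
  fun V => if drop (size V - size W) V == W then f (take (size V - size W) V)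
           else 0%R.

(* The two-sided ideal J generated by { FG - GF : F, G nonempty balanced }.
   Since the words span A and multiplication is bilinear, this is the
   smallest subspace containing the generators and closed under left and
   right multiplication by words. *)
Inductive inJ : elt -> Prop :=
| inJ_zero : inJ (fun _ => 0%R)
| inJ_gen (F G : word) : F != [::] -> G != [::] -> balanced F -> balanced G ->
    inJ (fun V => delta (F ++ G) V - delta (G ++ F) V)%R
| inJ_add (f g : elt) : inJ f -> inJ g -> inJ (fun V => f V + g V)%R
| inJ_scale (c : C) (f : elt) : inJ f -> inJ (fun V => c * f V)%R
| inJ_lmul (W : word) (f : elt) : inJ f -> inJ (lmulw W f)
| inJ_rmul (W : word) (f : elt) : inJ f -> inJ (rmulw f W).

Definition equivJ (X Y : word) : Prop := inJ (fun V => delta X V - delta Y V)%R.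

Definition swap_of_type (F G : word) (Z Z' : word) : Prop :=
  exists W1 W2 : word,
    (Z = W1 ++ F ++ G ++ W2 /\ Z' = W1 ++ G ++ F ++ W2) \/
    (Z = W1 ++ G ++ F ++ W2 /\ Z' = W1 ++ F ++ G ++ W2).

Definition UD_swap (Z Z' : word) : Prop :=
  exists U D : word, [/\ upper_prime U, lower_prime D & swap_of_type U D Z Z'].

Fixpoint chain (rel : word -> word -> Prop) (Z : word) (s : seq word) : Prop :=
  if s is Z' :: s' then rel Z Z' /\ chain rel Z' s' else True.

Definition UD_swap_sequence (X Y : word) : Prop :=
  exists s : seq word, chain UD_swap X s /\ last X s = Y.

(* Everything rests on the fact that any two balanced words F, G commute
   modulo UD-swaps.  Granting it, every generator FG - GF of J, hence every
   element of J, is a linear combination of differences X' - Y' of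
   UD-swap-equivalent words; the indicator function of the swap class of X is
   a linear functional killing all of them, so X - Y in J forces Y into that
   class.  Conversely a UD-swap exchanges two nonempty balanced words, so it
   is realised in J.

   Commutation is proved by induction on |F| + |G|.  Splitting off shortest
   balanced prefixes reduces it to F, G prime, and a prime word is upper or
   lower because e_k cannot vanish strictly inside it.  An upper and a lower
   prime swap directly, two lower primes reduce to two upper ones through the
   symmetry L <-> R, and two upper primes RAL, RBL, where A and B have all
   e_k >= 0 and are therefore products of upper primes commuting with the
   lower prime LR, satisfy RAL RBL ~ RLR AB L ~ RLR BA L ~ RBL RAL. *)

From mathcomp Require Import all_boot all_order all_algebra zify.
From Stdlib Require Import Relation_Operators Operators_Properties.
From Stdlib Require Import FunctionalExtensionality ClassicalEpsilon.
Set Implicit Arguments. Unset Strict Implicit. Unset Printing Implicit Defensive.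
Import Order.TTheory GRing.Theory Num.Theory.

Local Open Scope ring_scope.

Definition height (W : word) : int := \sum_(a <- W) bar a.

Lemma height_cons a W : height (a :: W) = bar a + height W.
Proof. exact: big_cons. Qed.

Lemma height_cat A B : height (A ++ B) = height A + height B.
Proof. exact: big_cat. Qed.

Lemma eE k W : e k W = height (take k W).
Proof. by []. Qed.

Lemma heightE W : height W = (count_mem R W)%:Z - (count_mem L W)%:Z.
Proof.
elim: W => [|a W IH]; first by rewrite /height big_nil.
by rewrite height_cons IH; case: a => /=; lia.
Qed.

Lemma balancedE W : balanced W = (height W == 0).
Proof. by rewrite heightE subr_eq0 eqz_nat eq_sym. Qed.

Lemma balanced_cat A B : balanced A -> balanced (A ++ B) = balanced B.
Proof. by rewrite !balancedE height_cat => /eqP->; rewrite add0r. Qed.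

Lemma e_cons k a W : e k.+1 (a :: W) = bar a + e k W.
Proof. by rewrite !eE /= height_cons. Qed.

Lemma e0 W : e 0 W = 0.
Proof. by rewrite eE take0 /height big_nil. Qed.

Lemma e_catl k A B : (k <= size A)%N -> e k (A ++ B) = e k A.
Proof. by move=> le_kA; rewrite !eE takel_cat. Qed.

Lemma e_step k W : `|e k.+1 W - e k W| <= 1.
Proof.
rewrite !eE -addn1 takeD height_cat addrAC subrr add0r.
by case: (drop k W) => [|[] ?]; rewrite /height /= ?take0 ?big_cons big_nil.
Qed.

Lemma positivity_persists (f : nat -> int) m :
  (forall k, `|f k.+1 - f k| <= 1) -> (forall k, (0 < k < m)%N -> f k != 0) ->
  0 < f 1%N -> forall k, (0 < k < m)%N -> 0 < f k.
Proof.
move=> step nz f1_gt0; elim=> [//|[//|k] IH] /andP[_ lt_km].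
have := step k.+1; have := nz k.+2 lt_km; have := IH (ltnW lt_km); lia.
Qed.

Lemma prime_word_e_neq0 P k : prime_word P -> (0 < k < size P)%N -> e k P != 0.
Proof.
case=> _ bP indec /andP[k_gt0 lt_kP]; apply/negP; rewrite eE -balancedE => btake.
apply: indec; exists (take k P), (drop k P).
rewrite -(balanced_cat (drop k P) btake) cat_take_drop.
rewrite -!size_eq0 size_take size_drop lt_kP.
by split; rewrite // -lt0n ?subn_gt0.
Qed.

Lemma prime_word_upper_or_lower P : prime_word P -> upper_prime P \/ lower_prime P.
Proof.
move=> pP; have nz := prime_word_e_neq0 pP.
case: P pP nz => [[//]|a P] pP nz.
have e1 : e 1 (a :: P) = bar a by rewrite e_cons e0 addr0.
have step := e_step^~ (a :: P).
case: a e1 pP nz step => e1 pP nz step; [right | left]; split=> // k /andP[k_gt0 le_kP].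
- rewrite -oppr_gt0; apply: (@positivity_persists (fun j => - e j (L :: P)) (size P).+1).
  + by move=> j; rewrite -opprD normrN.
  + by move=> j /nz; rewrite oppr_eq0.
  + by rewrite e1.
  + by rewrite k_gt0 ltnS.
- apply: (@positivity_persists (e^~ (R :: P)) (size P).+1) => //.
  + by rewrite e1.
  + by rewrite k_gt0 ltnS.
Qed.

Lemma balanced_prime_prefix W : W != [::] -> balanced W ->
  exists P W' : word, [/\ W = P ++ W', prime_word P & balanced W'].
Proof.
move=> nW bW; pose bal_prefix k := (0 < k)%N && balanced (take k W).
have bal_W : bal_prefix (size W) by rewrite /bal_prefix take_size bW lt0n size_eq0 nW.
have [m /andP[m_gt0 bP] min_m] := ex_minnP (ex_intro bal_prefix _ bal_W).
have le_mW : (m <= size W)%N := min_m _ bal_W.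
exists (take m W), (drop m W); rewrite cat_take_drop -(balanced_cat _ bP) cat_take_drop.
split=> //; split=> //; first by rewrite -size_eq0 size_takel // -lt0n.
move=> [A [B [nA nB bA bB EP]]].
have sizeAB : (size A + size B)%N = m by rewrite -size_cat -EP size_takel.
have : (m <= size A)%N.
  apply: min_m; rewrite /bal_prefix lt0n size_eq0 nA -(@take_takel _ _ m); last by lia.
  by rewrite EP take_size_cat.
have : (0 < size B)%N by rewrite lt0n size_eq0.
lia.
Qed.

Lemma prime_word_size P : prime_word P -> (1 < size P)%N.
Proof. by case: P => [[]|[] [|? ?] []]. Qed.

Definition nonneg (W : word) : Prop := forall k, 0 <= e k W.

Lemma nonneg_cat P W : balanced P -> nonneg (P ++ W) -> nonneg W.
Proof.
rewrite balancedE => /eqP hP nnPW k; have := nnPW (size P + k)%N.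
by rewrite eE takeD take_size_cat // drop_size_cat // height_cat hP add0r.
Qed.

Lemma nonneg_lower_prime P W : lower_prime P -> ~ nonneg (P ++ W).
Proof.
move=> [/prime_word_size lt1P negP] /(_ 1%N); rewrite e_catl 1?ltnW //.
by rewrite leNgt negP //; lia.
Qed.

Lemma upper_prime_shape U : upper_prime U ->
  exists A, [/\ U = R :: A ++ [:: L], balanced A & nonneg A].
Proof.
case: U => [[[]]//|a U] [[_ bU _] posU].
case/lastP: U bU posU => [|A b] bU posU; first by case: a bU {posU}.
have {posU} posA k : (k <= size A)%N -> 0 < bar a + e k A.
  move=> le_kA; have := posU k.+1; rewrite e_cons -cats1 e_catl //.
  by apply; rewrite /= size_cat addn1 ltnS.
have e0A := posA 0%N isT; rewrite e0 addr0 in e0A.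
have hA := posA _ (leqnn _); rewrite eE take_size in hA.
rewrite balancedE -cats1 -cat_cons height_cat height_cons [height [:: b]]big_seq1 in bU.
have Ea : a = R by case: a e0A {posA bU hA}.
subst a; have Eb : b = L by case: b bU => // /eqP bU; exfalso; lia.
subst b; have hA0 : height A = 0 by move/eqP: bU => /=; lia.
exists A; split; first by rewrite cats1.
  by rewrite balancedE hA0.
move=> k; case: (leqP k (size A)) => [/posA /= | lt_Ak]; first by lia.
by rewrite eE take_oversize ?hA0 // ltnW.
Qed.

Definition flip (a : letter) : letter := if a is L then R else L.
Definition mirror (W : word) : word := map flip W.

Lemma mirrorK : involutive mirror.
Proof. by apply: mapK; case. Qed.

Lemma mirror_cat A B : mirror (A ++ B) = mirror A ++ mirror B.
Proof. exact: map_cat. Qed.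

Lemma height_mirror W : height (mirror W) = - height W.
Proof. by rewrite /height big_map -sumrN; apply: eq_bigr; case. Qed.

Lemma e_mirror k W : e k (mirror W) = - e k W.
Proof. by rewrite !eE -map_take height_mirror. Qed.

Lemma balanced_mirror W : balanced (mirror W) = balanced W.
Proof. by rewrite !balancedE height_mirror oppr_eq0. Qed.

Lemma prime_word_mirror P : prime_word P -> prime_word (mirror P).
Proof.
case=> nP bP indec; split; rewrite ?balanced_mirror -?size_eq0 ?size_map ?size_eq0 //.
move=> [A [B [nA nB bA bB EP]]]; apply: indec; exists (mirror A), (mirror B).
by rewrite !balanced_mirror -!size_eq0 !size_map !size_eq0 -mirror_cat -EP mirrorK.
Qed.

Lemma upper_prime_mirror P : lower_prime P -> upper_prime (mirror P).
Proof.
case=> /prime_word_mirror pP negP; split=> // k.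
by rewrite size_map e_mirror oppr_gt0; exact: negP.
Qed.

Lemma lower_prime_mirror P : upper_prime P -> lower_prime (mirror P).
Proof.
case=> /prime_word_mirror pP posP; split=> // k.
by rewrite size_map e_mirror oppr_lt0; exact: posP.
Qed.

Local Notation eqv := (clos_refl_sym_trans word UD_swap).

Lemma clos_rst_homo (T : Type) (r : T -> T -> Prop) (f : T -> T) :
  (forall x y, r x y -> r (f x) (f y)) ->
  forall x y, clos_refl_sym_trans T r x y -> clos_refl_sym_trans T r (f x) (f y).
Proof.
move=> homo_f x y; elim=> {x y} [x y /homo_f|x|x y _|x y z _ IHxy _ IHyz].
- exact: rst_step.
- exact: rst_refl.
- exact: rst_sym.
- exact: rst_trans IHxy IHyz.
Qed.

Lemma eqv_cat A B X Y : eqv X Y -> eqv (A ++ X ++ B) (A ++ Y ++ B).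
Proof.
apply: (clos_rst_homo (f := fun Z => A ++ Z ++ B)).
move=> {}X {}Y [U [D [HU HD [W1 [W2 sw]]]]].
exists U, D; split=> //; exists (A ++ W1), (W2 ++ B).
by case: sw => -[-> ->]; [left | right]; rewrite -!catA.
Qed.

Lemma eqv_mirror X Y : eqv X Y -> eqv (mirror X) (mirror Y).
Proof.
apply: clos_rst_homo => {}X {}Y [U [D [HU HD [W1 [W2 sw]]]]].
exists (mirror D), (mirror U).
split; [exact: upper_prime_mirror | exact: lower_prime_mirror |].
exists (mirror W1), (mirror W2).
by case: sw => -[-> ->]; [right | left]; rewrite !mirror_cat.
Qed.

Definition eqv_commute A B := eqv (A ++ B) (B ++ A).

Lemma eqv_commute_sym A B : eqv_commute A B -> eqv_commute B A.
Proof. exact: rst_sym. Qed.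

Lemma eqv_commute_nil A : eqv_commute [::] A.
Proof. by rewrite /eqv_commute cats0; exact: rst_refl. Qed.

Lemma eqv_commute_catl A B C :
  eqv_commute A C -> eqv_commute B C -> eqv_commute (A ++ B) C.
Proof.
move=> AC BC; have := eqv_cat [::] B AC; have := eqv_cat A [::] BC.
rewrite /eqv_commute /= !cats0 -!catA; exact: rst_trans.
Qed.

Lemma eqv_commute_mirror A B : eqv_commute (mirror A) (mirror B) -> eqv_commute A B.
Proof. by move/eqv_mirror; rewrite !mirror_cat !mirrorK. Qed.

Lemma eqv_commute_upper_lower U D : upper_prime U -> lower_prime D -> eqv_commute U D.
Proof.
move=> HU HD; apply: rst_step; exists U, D; split=> //.
by exists [::], [::]; left; rewrite !cats0.
Qed.

Lemma eqv_commute_nonneg_lower A D :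
  balanced A -> nonneg A -> lower_prime D -> eqv_commute A D.
Proof.
move=> + + HD; have [n] := ubnP (size A); elim: n => // n IH in A *.
rewrite ltnS => le_An bA nnA; have [->|nA] := eqVneq A [::]; first exact: eqv_commute_nil.
have [P [A' [EA pP bA']]] := balanced_prime_prefix nA bA.
rewrite EA in le_An nnA *; apply: eqv_commute_catl.
  case: (prime_word_upper_or_lower pP) => [HU | /nonneg_lower_prime /(_ nnA) //].
  exact: eqv_commute_upper_lower.
have bP : balanced P by case: pP.
apply: IH (nonneg_cat bP nnA) => //.
by move: le_An (prime_word_size pP); rewrite size_cat; lia.
Qed.

Lemma lower_prime_LR : lower_prime [:: L; R].
Proof.
split; last by case=> [|[|k]] // _; rewrite e_cons e0.
split=> // -[[|a [|b A]] [B [nA nB bA _ E]]] //.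
  by case: E bA => <-.
by move/(congr1 size): E nB; rewrite /= size_cat; case: B => //= *; lia.
Qed.

Lemma eqv_commute_bracket A B :
  balanced A -> nonneg A -> balanced B -> nonneg B -> eqv_commute A B ->
  eqv_commute (R :: A ++ [:: L]) (R :: B ++ [:: L]).
Proof.
move=> bA nnA bB nnB AB.
have := eqv_cat [:: R] (A ++ [:: L]) (eqv_commute_nonneg_lower bB nnB lower_prime_LR).
have := eqv_cat [:: R; L; R] [:: L] AB.
have := eqv_cat [:: R] (B ++ [:: L]) (eqv_commute_nonneg_lower bA nnA lower_prime_LR).
rewrite /eqv_commute -!catA /= => ALR AB' BLR.
rewrite -!catA /=; apply: rst_trans ALR _; apply: rst_trans AB' _; exact: rst_sym.
Qed.

Theorem eqv_commute_balanced F G : balanced F -> balanced G -> eqv_commute F G.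
Proof.
have [n] := ubnP (size F + size G); elim: n => // n IH in F G *.
rewrite ltnS => le_FG bF bG.
have [->|nF] := eqVneq F [::]; first exact: eqv_commute_nil.
have [->|nG] := eqVneq G [::]; first exact/eqv_commute_sym/eqv_commute_nil.
have [P [F' [EF pP bF']]] := balanced_prime_prefix nF bF.
have [Q [G' [EG pQ bG']]] := balanced_prime_prefix nG bG.
have bP : balanced P by case: pP.
have bQ : balanced Q by case: pQ.
have [lt1P lt1Q] := (prime_word_size pP, prime_word_size pQ).
have [EF'|nF'] := eqVneq F' [::]; last first.
  have : (0 < size F')%N by rewrite lt0n size_eq0.
  move: le_FG; rewrite EF size_cat => le_FG lt0F'.
  by apply: eqv_commute_catl; apply: IH => //; lia.
have [EG'|nG'] := eqVneq G' [::]; last first.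
  have : (0 < size G')%N by rewrite lt0n size_eq0.
  move: le_FG; rewrite EG size_cat => le_FG lt0G'.
  by apply/eqv_commute_sym/eqv_commute_catl; apply/eqv_commute_sym/IH => //; lia.
rewrite EF EG EF' EG' !cats0 in le_FG *.
have upper_case U V : upper_prime U -> upper_prime V -> (size U + size V <= n)%N ->
    eqv_commute U V.
  move=> /upper_prime_shape[A [-> bA nnA]] /upper_prime_shape[B [-> bB nnB]].
  rewrite /= !size_cat /= => le_UV.
  by apply: eqv_commute_bracket => //; apply: IH => //; lia.
case: (prime_word_upper_or_lower pP) => [UP|DP];
  case: (prime_word_upper_or_lower pQ) => [UQ|DQ].
- exact: upper_case.
- exact: eqv_commute_upper_lower.
- exact/eqv_commute_sym/eqv_commute_upper_lower.
- apply/eqv_commute_mirror/upper_case; rewrite ?size_map //; exact: upper_prime_mirror.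
Qed.

Lemma UD_swap_sym X Y : UD_swap X Y -> UD_swap Y X.
Proof.
move=> [U [D [HU HD [W1 [W2 sw]]]]]; exists U, D; split=> //.
by exists W1, W2; case: sw => -[-> ->]; [right | left].
Qed.

Lemma UD_swap_sequence_rst1n X Y :
  UD_swap_sequence X Y <-> clos_refl_sym_trans_1n word UD_swap X Y.
Proof.
split=> [[s []]|].
  elim: s X => [|Z s IH] X /=; first by move=> _ ->; exact: rst1n_refl.
  by move=> [XZ ZS] /(IH _ ZS); apply: rst1n_trans; left.
elim=> {X Y} [X|X Z Y XZ _ [s [ZS <-]]]; first by exists [::].
by exists (Z :: s); split=> //; split=> //; case: XZ => // /UD_swap_sym.
Qed.

Definition deltaB (A B : word) : elt := fun V => delta A V - delta B V.

Lemma inJ_ext f g : inJ f -> f =1 g -> inJ g.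
Proof. by move=> Jf /functional_extensionality <-. Qed.

Lemma delta_catl W A V :
  delta (W ++ A) V = if take (size W) V == W then delta A (drop (size W) V) else 0.
Proof.
rewrite /delta; have [->|nEV] := eqVneq V (W ++ A).
  by rewrite take_size_cat // drop_size_cat // !eqxx.
case: eqP => // tV; case: eqP => // dV; case/eqP: nEV.
by rewrite -(cat_take_drop (size W) V) tV dV.
Qed.

Lemma delta_catr W A V :
  delta (A ++ W) V =
  if drop (size V - size W) V == W then delta A (take (size V - size W) V) else 0.
Proof.
rewrite /delta; have [->|nEV] := eqVneq V (A ++ W).
  by rewrite size_cat addnK take_size_cat // drop_size_cat // !eqxx.
case: eqP => // dV; case: eqP => // tV; case/eqP: nEV.
by rewrite -(cat_take_drop (size V - size W) V) tV dV.
Qed.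

Lemma lmulw_deltaB W A B : lmulw W (deltaB A B) =1 deltaB (W ++ A) (W ++ B).
Proof. by move=> V; rewrite /lmulw /deltaB !delta_catl; case: ifP; rewrite ?subr0. Qed.

Lemma rmulw_deltaB W A B : rmulw (deltaB A B) W =1 deltaB (A ++ W) (B ++ W).
Proof. by move=> V; rewrite /rmulw /deltaB !delta_catr; case: ifP; rewrite ?subr0. Qed.

Lemma inJ_swap W1 W2 F G : F != [::] -> G != [::] -> balanced F -> balanced G ->
  inJ (deltaB (W1 ++ F ++ G ++ W2) (W1 ++ G ++ F ++ W2)).
Proof.
move=> nF nG bF bG; have := inJ_rmul W2 (inJ_gen nF nG bF bG).
move/inJ_ext/(_ (rmulw_deltaB _ _ _))/(inJ_lmul W1)/inJ_ext.
by apply=> V; rewrite lmulw_deltaB -!catA.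
Qed.

Lemma eqv_equivJ X Y : eqv X Y -> equivJ X Y.
Proof.
elim=> {X Y} [X Y [U [D [[[nU bU _] _] [[nD bD _] _] [W1 [W2 sw]]]]]|
              X|X Y _ JXY|X Y Z _ JXY _ JYZ].
- by case: sw => -[-> ->]; exact: inJ_swap.
- by apply: inJ_ext inJ_zero _ => V; rewrite subrr.
- by apply: inJ_ext (inJ_scale (-1) JXY) _ => V; rewrite mulN1r opprB.
- by apply: inJ_ext (inJ_add JXY JYZ) _ => V; rewrite addrA subrK.
Qed.

(* A triple (c, A, B) stands for c (A - B). *)
Definition lincomb (l : seq (C * word * word)) : elt :=
  fun V => \sum_(t <- l) t.1.1 * deltaB t.1.2 t.2 V.

Lemma inJ_lincomb f : inJ f ->
  exists2 l, {in l, forall t, eqv t.1.2 t.2} & f =1 lincomb l.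
Proof.
rewrite /lincomb; elim=> {f}.
- by exists [::] => // V; rewrite big_nil.
- move=> F G _ _ bF bG; exists [:: (1, F ++ G, G ++ F)].
    by move=> t; rewrite mem_seq1 => /eqP-> /=; exact: eqv_commute_balanced.
  by move=> V; rewrite big_seq1 mul1r.
- move=> f g _ [l1 eqv1 f1] _ [l2 eqv2 g2]; exists (l1 ++ l2).
    by move=> t; rewrite mem_cat => /orP[/eqv1|/eqv2].
  by move=> V; rewrite big_cat f1 g2.
- move=> c f _ [l eqvl fl]; exists [seq (c * t.1.1, t.1.2, t.2) | t <- l].
    by move=> t /mapP[t' /eqvl ? ->].
  by move=> V; rewrite big_map fl mulr_sumr; apply: eq_bigr => t _; rewrite mulrA.
- move=> W f _ [l eqvl fl]; exists [seq (t.1.1, W ++ t.1.2, W ++ t.2) | t <- l].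
    by move=> t /mapP[t' /eqvl /(eqv_cat W [::])]; rewrite !cats0 => ? ->.
  move=> V; rewrite big_map /lmulw fl; under eq_bigr do rewrite -lmulw_deltaB /lmulw.
  by case: ifP => // _; rewrite big1 // => t _; rewrite mulr0.
- move=> W f _ [l eqvl fl]; exists [seq (t.1.1, t.1.2 ++ W, t.2 ++ W) | t <- l].
    by move=> t /mapP[t' /eqvl /(eqv_cat [::] W) ? ->].
  move=> V; rewrite big_map /rmulw fl; under eq_bigr do rewrite -rmulw_deltaB /rmulw.
  by case: ifP => // _; rewrite big1 // => t _; rewrite mulr0.
Qed.

Lemma sum_mul_deltaB (s : seq word) (g : word -> C) A B :
  uniq s -> A \in s -> B \in s ->
  \sum_(V <- s) g V * deltaB A B V = g A - g B.
Proof.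
move=> us As Bs; have sum_delta X : X \in s -> \sum_(V <- s) g V * delta X V = g X.
  move=> Xs; rewrite (bigD1_seq X) // big1 => [|V /negPf nVX]; last first.
    by rewrite /delta nVX mulr0.
  by rewrite Monoid.mulm1 /delta eqxx mulr1.
by rewrite -!sum_delta // -sumrB; apply: eq_bigr => V _; rewrite mulrBr.
Qed.

Lemma sum_mul_lincomb (s : seq word) (g : word -> C) l : uniq s ->
  {in l, forall t, t.1.2 \in s /\ t.2 \in s} ->
  \sum_(V <- s) g V * lincomb l V = \sum_(t <- l) t.1.1 * (g t.1.2 - g t.2).
Proof.
move=> us ls; rewrite /lincomb; under eq_bigr do rewrite mulr_sumr.
rewrite exchange_big; apply: eq_big_seq => t /ls[s1 s2].
by rewrite -(sum_mul_deltaB g us s1 s2) mulr_sumr; apply: eq_bigr => V _; rewrite mulrCA.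
Qed.

Lemma equivJ_eqv X Y : equivJ X Y -> eqv X Y.
Proof.
case/inJ_lincomb => l eqvl XY.
pose g V : C := if excluded_middle_informative (eqv X V) then 1 else 0.
have g_eqv A B : eqv A B -> g A = g B.
  move=> AB; rewrite /g; case: (excluded_middle_informative (eqv X A)) => XA;
    case: (excluded_middle_informative (eqv X B)) => XB //.
  - by case: XB; exact: rst_trans XA AB.
  - by case: XA; apply: rst_trans XB _; exact: rst_sym.
pose s := undup (X :: Y :: [seq t.1.2 | t <- l] ++ [seq t.2 | t <- l]).
have s_l : {in l, forall t, t.1.2 \in s /\ t.2 \in s}.
  by move=> t lt; rewrite !mem_undup !in_cons !mem_cat !(map_f _ lt) !orbT.
have := sum_mul_lincomb g (undup_uniq _) s_l.
under eq_bigr do rewrite -XY.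
rewrite sum_mul_deltaB ?undup_uniq ?mem_undup ?in_cons ?eqxx ?orbT //.
rewrite big1_seq => [|t /andP[_ /eqvl /g_eqv ->]]; last by rewrite subrr mulr0.
move/subr0_eq; rewrite /g.
case: (excluded_middle_informative (eqv X X)) => [XX|nXX]; last first.
  by case: nXX; exact: rst_refl.
case: (excluded_middle_informative (eqv X Y)) => [//|nXY].
by move/(congr1 (fun c : C => c == 0)); rewrite oner_eq0 eqxx.
Qed.

Theorem corollary5p4 (X Y : word) : equivJ X Y <-> UD_swap_sequence X Y.
Proof.
rewrite UD_swap_sequence_rst1n -clos_rst_rst1n_iff.
by split; [exact: equivJ_eqv | exact: eqv_equivJ].
Qed.
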